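(* Let $d\ge2$ and let $\rho_{DS}$ be a diagonal symmetric state on $(\mathbb{C}^d)^{\otimes 4}$. If the partial transpose of $\rho_{DS}$ with respect to the bipartition of the four parties into two pairs ($2:2$) is positive semidefinite, then $\rho_{DS}$ is PPT, i.e. its partial transpose with respect to every bipartition of the four parties is positive semidefinite.
   Context: For $N=4$ parties and local dimension $d$, Dicke states are $|D_{\mathbf k}\rangle=\binom{4}{\mathbf k}^{-1/2}\sum_{\pi}\pi\big(|0\rangle^{\otimes k_0}\otimes\cdots\otimes|d-1\rangle^{\otimes k_{d-1}}\big)$, where $\mathbf k=(k_0,\dots,k_{d-1})$, $k_i\ge0$, $\sum k_i=4$, the sum runs over distinct permutations of the tensor factors and $\binom{4}{\mathbf k}=\frac{4!}{k_0!\cdots k_{d-1}!}$. A diagonal symmetric state is a convex mixture $\sum_{\mathbf k}p_{\mathbf k}|D_{\mathbf k}\rangle\langle D_{\mathbf k}|$ with $p_{\mathbf k}\ge0$, $\sum p_{\mathbf k}=1$. By permutation symmetry the relevant bipartitions are $1:3$ and $2:2$. *)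

From HB Require Import structures.
From mathcomp Require Import all_boot all_order all_algebra.
Set Implicit Arguments. Unset Strict Implicit. Unset Printing Implicit Defensive.
Import Order.TTheory GRing.Theory Num.Theory Num.Def.
Local Open Scope ring_scope.

(* Computational basis of (C^d)^{⊗4}: words x : 'I_4 -> 'I_d. *)
Definition basis4 (d : nat) := {ffun 'I_4 -> 'I_d}.

(* Operators on (C^d)^{⊗4}, as square matrices indexed (via enum_rank)
   by the computational basis. *)
Notation op C d := 'M[C]_(#|{ffun 'I_4 -> 'I_d}|).
Notation ket C d := 'cV[C]_(#|{ffun 'I_4 -> 'I_d}|).

Definition psdmx (C : numClosedFieldType) (n : nat) (A : 'M[C]_n) : Prop :=
  forall v : 'cV[C]_n, 0 <= ((map_mx conjC v)^T *m A *m v) 0 0.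

(* occupation vectors k = (k_0,...,k_{d-1}), k_i >= 0, sum k_i = 4 *)
Definition occ (d : nat) := {ffun 'I_d -> 'I_5}.
Definition valid_occ d (k : occ d) : bool := (\sum_(i < d) (k i : nat) == 4)%N.

Definition multinom d (k : occ d) : nat :=
  (4`! %/ \prod_(i < d) (k i : nat)`!)%N.

(* x is a distinct rearrangement of |0>^{k_0} ... |d-1>^{k_{d-1}}
   iff letter i occurs exactly k_i times in x *)
Definition has_occ d (k : occ d) (x : basis4 d) : bool :=
  [forall i : 'I_d, #|[pred j : 'I_4 | x j == i]| == (k i : nat)].

Definition dicke (C : numClosedFieldType) d (k : occ d) : ket C d :=
  \col_(r < #|{ffun 'I_4 -> 'I_d}|)
     (if has_occ k (enum_val r : basis4 d) then (sqrtC ((multinom k)%:R : C))^-1 else 0).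

Definition diag_sym_state (C : numClosedFieldType) d (p : occ d -> C) : op C d :=
  \sum_(k : occ d | valid_occ k)
     p k *: (dicke C k *m (map_mx conjC (dicke C k))^T).

(* partial transpose with respect to the parties in S:
   <x| M^{T_S} |y> = <x'| M |y'>, where x' (resp. y') agrees with x (resp. y)
   outside S and with y (resp. x) on S *)
Definition ptranspose (C : numClosedFieldType) d (S : {set 'I_4}) (M : op C d)
  : op C d :=
  \matrix_(r, s)
    let x : basis4 d := enum_val r in let y : basis4 d := enum_val s in
    M (enum_rank ([ffun a => if a \in S then y a else x a] : basis4 d))
      (enum_rank ([ffun a => if a \in S then x a else y a] : basis4 d)).

From HB Require Import structures.
From mathcomp Require Import all_boot all_order all_algebra all_fingroup.
From mathcomp Require Import zify.
Import Order.TTheory GRing.Theory Num.Theory Num.Def.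
Set Implicit Arguments. Unset Strict Implicit. Unset Printing Implicit Defensive.
Local Open Scope ring_scope.

(* The matrix of a diagonal symmetric state is block diagonal in the occupation
   numbers: <x|rho|y> vanishes unless the words x and y have the same occupation
   vector, and is then a nonnegative weight w of that occupation vector.
   Relabelling the parties preserves rho, so positivity of a partial transpose
   only depends on the size of the transposed set, and the transposes over a set
   and over its complement are transposes of each other: it suffices to derive
   the 1:3 case from the 2:2 case.  The transpose on the first party is block
   diagonal with respect to occ(x1 x2 x3) - occ(x0), and inside a block its
   entry at (x, y) only depends on x0 and y0.  If x0 does not occur in x1 x2 x3,
   all words of the block share x0 and the block is constant and nonnegative;
   otherwise the label is the occupation vector of two letters s, t, and the
   block is a pullback of the kernel (a, c) |-> w(a c s t), which is the
   compression of the 2:2 transpose to the words (a, t, a, s). *)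

Definition qform (C : numClosedFieldType) (T : finType)
    (K : T -> T -> C) (v : T -> C) : C :=
  \sum_x \sum_y (v x)^* * v y * K x y.

Definition psd_kernel (C : numClosedFieldType) (T : finType) (K : T -> T -> C) : Prop :=
  forall v, 0 <= qform K v.

Section KernelTheory.
Variables (C : numClosedFieldType) (T : finType).
Implicit Types (K : T -> T -> C) (v : T -> C).

Lemma psdmx_kernel (M : 'M[C]_#|T|) :
  psdmx M <-> psd_kernel (fun x y => M (enum_rank x) (enum_rank y)).
Proof.
have qformE (v : 'cV_#|T|) : ((map_mx conjC v)^T *m M *m v) 0 0 =
    qform (fun x y => M (enum_rank x) (enum_rank y)) (fun x => v (enum_rank x) 0).
  rewrite mxE /qform [RHS]exchange_big (reindex (@enum_rank T)) /=; last first.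
    by exists enum_val => i _; rewrite ?enum_valK ?enum_rankK.
  apply: eq_bigr => y _; rewrite !mxE mulr_suml (reindex (@enum_rank T)) /=; last first.
    by exists enum_val => i _; rewrite ?enum_valK ?enum_rankK.
  by apply: eq_bigr => x _; rewrite !mxE mulrAC.
split=> [psdM v | psdK v]; last by rewrite qformE.
have := psdM (\col_i v (enum_val i)); rewrite qformE.
congr (0 <= _); apply: eq_bigr => x _; apply: eq_bigr => y _.
by rewrite !mxE !enum_rankK.
Qed.

Lemma eq_psd_kernel K K' : K =2 K' -> psd_kernel K -> psd_kernel K'.
Proof.
move=> eqKK' psdK v; have := psdK v; congr (0 <= _).
by apply: eq_bigr => x _; apply: eq_bigr => y _; rewrite eqKK'.
Qed.

Lemma psd_kernel_transpose K : psd_kernel K -> psd_kernel (fun x y => K y x).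
Proof.
move=> psdK v; have := psdK (fun x => (v x)^*).
rewrite /qform exchange_big /=; congr (0 <= _).
apply: eq_bigr => y _; apply: eq_bigr => x _.
by rewrite conjCK [v x * _]mulrC.
Qed.

Lemma psd_kernel_const (c : C) : 0 <= c -> psd_kernel (fun _ _ : T => c).
Proof.
move=> c_ge0 v.
have -> : qform (fun _ _ => c) v = c * ((\sum_x v x)^* * \sum_x v x).
  rewrite /qform rmorph_sum big_distrlr /= mulr_sumr; apply: eq_bigr => x _.
  by rewrite mulr_sumr; apply: eq_bigr => y _; rewrite mulrC.
by rewrite mulr_ge0 // mulrC mul_conjC_ge0.
Qed.

Lemma qform_comp (U : finType) (f : T -> U) (L : U -> U -> C) v :
  qform (fun x y => L (f x) (f y)) v = qform L (fun u => \sum_(x | f x == u) v x).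
Proof.
rewrite /qform (partition_big f predT) //=; apply: eq_bigr => u _.
under [RHS]eq_bigr => u' _ do rewrite rmorph_sum !mulr_suml.
rewrite [RHS]exchange_big /=; apply: eq_bigr => x /eqP fx.
rewrite (partition_big f predT) //=; apply: eq_bigr => u' _.
rewrite mulr_sumr mulr_suml; apply: eq_bigr => y /eqP fy.
by rewrite fx fy.
Qed.

Lemma psd_kernel_comp (U : finType) (f : T -> U) (L : U -> U -> C) :
  psd_kernel L -> psd_kernel (fun x y => L (f x) (f y)).
Proof. by move=> psdL v; rewrite qform_comp. Qed.

Lemma qform_supported (P : pred T) K K' v :
    (forall x y, P x -> P y -> K x y = K' x y) -> (forall x, ~~ P x -> v x = 0) ->
  qform K v = qform K' v.
Proof.
move=> eqKK' v0; apply: eq_bigr => x _; apply: eq_bigr => y _.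
have [Px | /v0 ->] := boolP (P x); last by rewrite rmorph0 !mul0r.
have [Py | /v0 ->] := boolP (P y); last by rewrite mulr0 !mul0r.
by rewrite eqKK'.
Qed.

Lemma psd_kernel_blocks (L : eqType) (lab : T -> L) K :
    (forall x y, lab x != lab y -> K x y = 0) ->
    (forall z v, (forall x, lab x != lab z -> v x = 0) -> 0 <= qform K v) ->
  psd_kernel K.
Proof.
move=> K0 psd_block v.
pose block x := [set y | lab y == lab x].
have block_eq x y : (block x == block y) = (lab x == lab y).
  apply/eqP/eqP => [Exy | Exy]; last by apply/setP => u; rewrite !inE Exy.
  have : y \in block x by rewrite Exy inE.
  by rewrite inE eq_sym => /eqP.
pose vb z x := if block x == block z then v x else 0.
rewrite /qform (partition_big block [pred B | [exists z, block z == B]]) /=; last first.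
  by move=> x _; apply/existsP; exists x.
apply: sumr_ge0 => B /existsP[z /eqP <-{B}].
have -> : \sum_(x | block x == block z) \sum_y (v x)^* * v y * K x y = qform K (vb z).
  rewrite /qform big_mkcond; apply: eq_bigr => x _; rewrite /vb.
  case: ifP => [bx | _]; last by rewrite big1 // => y _; rewrite rmorph0 !mul0r.
  apply: eq_bigr => y _; case: ifP => // /negbT.
  by rewrite -(eqP bx) block_eq eq_sym => /K0 ->; rewrite !mulr0.
by apply: (psd_block z) => x; rewrite /vb block_eq => /negbTE ->.
Qed.

End KernelTheory.

Lemma card_eq_perm (T : finType) (A B : {set T}) :
  #|A| = #|B| -> exists s : {perm T}, s @: A = B.
Proof.
move eqn: #|A :\: B| => n; elim: n A eqn => [|n IHn] A diffAB cardAB.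
  exists 1%g; rewrite (eq_imset _ (@perm1 _)) imset_id; apply/eqP.
  by rewrite eqEcard -setD_eq0 -cards_eq0 diffAB cardAB /=.
have [a ABa] : exists a, a \in A :\: B by apply/set0Pn; rewrite -cards_eq0 diffAB.
have [b BAb] : exists b, b \in B :\: A.
  by apply/set0Pn; rewrite -cards_eq0 cardsD setIC -cardAB -cardsD diffAB.
move: ABa BAb; rewrite !inE => /andP[Ba Aa] /andP[Ab Bb].
pose t := tperm a b.
have card_tA : #|t @: A| = #|B| by rewrite card_imset //; apply: perm_inj.
have diff_tA : #|t @: A :\: B| = n.
  suff -> : t @: A :\: B = (A :\: B) :\ a.
    by move: diffAB; rewrite (cardsD1 a) !inE Aa Ba add1n => -[].
  have mem_tA x : (x \in t @: A) = (t x \in A).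
    apply/imsetP/idP => [[y Ay ->] | Atx]; first by rewrite tpermK.
    by exists (t x); rewrite ?tpermK.
  apply/setP => x; rewrite !inE mem_tA.
  case: tpermP => [-> | -> | /eqP xa _]; first by rewrite eqxx (negbTE Ab) andbF.
    by rewrite Bb /= andbF.
  by rewrite xa.
have [s sAB] := IHn _ diff_tA card_tA.
by exists (t * s)%g; rewrite -sAB -imset_comp; apply: eq_imset => x; rewrite permM.
Qed.

Definition i0 : 'I_4 := @Ordinal 4 0 isT.
Definition i1 : 'I_4 := @Ordinal 4 1 isT.
Definition i2 : 'I_4 := @Ordinal 4 2 isT.
Definition i3 : 'I_4 := @Ordinal 4 3 isT.

Section Words.
Variable d : nat.
Implicit Types (x y : basis4 d) (s : seq 'I_d).

Definition word x : seq 'I_d := [:: x i0; x i1; x i2; x i3].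

Definition occ_seq s : {ffun 'I_d -> int} := [ffun i => (count_mem i s)%:Z].

Definition occ_word x : {ffun 'I_d -> int} := occ_seq (word x).

Definition graft (T : {set 'I_4}) x y : basis4 d :=
  [ffun a => if a \in T then y a else x a].

Definition relabel (pi : {perm 'I_4}) x : basis4 d := [ffun a => x (pi a)].

Lemma occ_seq_cons a s : occ_seq (a :: s) = occ_seq [:: a] + occ_seq s.
Proof. by apply/ffunP => i; rewrite !ffunE /= addn0 PoszD. Qed.

Lemma occ_seq_perm s1 s2 : perm_eq s1 s2 -> occ_seq s1 = occ_seq s2.
Proof. by move=> /seq.permP eq12; apply/ffunP => i; rewrite !ffunE eq12. Qed.

Lemma card_word x i : #|[pred j | x j == i]| = count_mem i (word x).
Proof.
rewrite -sum1_card big_mkcond /= !big_ord_recl big_ord0 /= addn0.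
have -> : lift ord0 (ord0 : 'I_3) = i1 by apply: val_inj.
have -> : lift ord0 (lift ord0 (ord0 : 'I_2)) = i2 by apply: val_inj.
have -> : lift ord0 (lift ord0 (lift ord0 (ord0 : 'I_1))) = i3 by apply: val_inj.
have -> : (ord0 : 'I_4) = i0 by apply: val_inj.
by rewrite !inE; do 4 case: (_ == i).
Qed.

Lemma occ_word_relabel pi x : occ_word (relabel pi x) = occ_word x.
Proof.
apply/ffunP => i; rewrite !ffunE -!card_word -!sum1_card; congr Posz.
rewrite [RHS](reindex_inj (@perm_inj _ pi)) /=.
by apply: eq_bigl => j; rewrite !inE ffunE.
Qed.

Lemma graftC T x y : graft (~: T) x y = graft T y x.
Proof. by apply/ffunP => a; rewrite !ffunE inE; case: (a \in T). Qed.

Lemma graft_relabel pi T x y :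
  graft T (relabel pi x) (relabel pi y) = relabel pi (graft (pi @: T) x y).
Proof.
by apply/ffunP => a; rewrite !ffunE (mem_imset _ _ (@perm_inj _ pi)).
Qed.

Definition rest x : seq 'I_d := [:: x i1; x i2; x i3].

Definition occ_diff x : {ffun 'I_d -> int} := occ_seq (rest x) - occ_seq [:: x i0].

Lemma occ_word_graft_i0 x y :
  occ_word (graft [set i0] x y) = occ_seq [:: x i0] + occ_seq [:: y i0] + occ_diff x.
Proof.
rewrite /occ_word /word !ffunE !inE /= occ_seq_cons /occ_diff.
by rewrite [RHS]addrC addrA addrNK addrC.
Qed.

Lemma occ_diff_notin x y :
  occ_diff y = occ_diff x -> x i0 \notin rest x -> y i0 = x i0.
Proof.
move=> /esym/ffunP/(_ (x i0)); rewrite !ffunE => eq_xy /count_memPn x0_rest.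
move: eq_xy; rewrite x0_rest /= eqxx; case: (y i0 =P x i0) => // _; lia.
Qed.

Lemma occ_diff_in x : x i0 \in rest x -> exists a b, occ_diff x = occ_seq [:: a; b].
Proof.
move=> x0_rest; rewrite /occ_diff (occ_seq_perm (perm_to_rem x0_rest)).
rewrite (occ_seq_cons _ (rem _ _)) addrC addKr.
have : size (rem (x i0) (rest x)) = 2%N by rewrite size_rem.
by case: (rem _ _) => [|a [|b []]] // _; exists a, b.
Qed.

End Words.

Section PartialTranspose.
Variables (C : numClosedFieldType) (d : nat).
Implicit Types (M : op C d) (T : {set 'I_4}) (pi : {perm 'I_4}) (x y : basis4 d).

Lemma ptransposeE T M x y :
  ptranspose T M (enum_rank x) (enum_rank y) =
    M (enum_rank (graft T x y)) (enum_rank (graft T y x)).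
Proof. by rewrite mxE !enum_rankK. Qed.

Lemma psdmx_ptransposeC T M :
  psdmx (ptranspose T M) -> psdmx (ptranspose (~: T) M).
Proof.
move=> /psdmx_kernel/psd_kernel_transpose psdT; apply/psdmx_kernel.
by apply: (eq_psd_kernel _ psdT) => x y; rewrite !ptransposeE !graftC.
Qed.

Definition relabel_invariant M := forall pi x y,
  M (enum_rank (relabel pi x)) (enum_rank (relabel pi y)) = M (enum_rank x) (enum_rank y).

Lemma psdmx_ptranspose_relabel M pi T : relabel_invariant M ->
  psdmx (ptranspose T M) -> psdmx (ptranspose (pi @: T) M).
Proof.
move=> invM /psdmx_kernel psdT; apply/psdmx_kernel.
apply: (eq_psd_kernel _ (psd_kernel_comp (relabel pi) psdT)) => x y.
by rewrite /= !ptransposeE !graft_relabel invM.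
Qed.

Lemma psdmx_ptranspose_card M T T' : relabel_invariant M -> #|T| = #|T'| ->
  psdmx (ptranspose T M) -> psdmx (ptranspose T' M).
Proof. by move=> invM /card_eq_perm[pi <-]; apply: psdmx_ptranspose_relabel. Qed.

End PartialTranspose.

Section DiagonalSymmetric.
Variables (C : numClosedFieldType) (d : nat) (p : occ d -> C).
Hypothesis p_ge0 : forall k, valid_occ k -> 0 <= p k.
Implicit Types (x y : basis4 d) (m : {ffun 'I_d -> int}).
Local Notation rho := (diag_sym_state p).

Definition occ_int (k : occ d) : {ffun 'I_d -> int} := [ffun i => (k i : nat)%:Z].

Definition dicke_weight m : C :=
  \sum_(k : occ d | valid_occ k && (occ_int k == m)) p k / (multinom k)%:R.

Lemma dicke_weight_ge0 m : 0 <= dicke_weight m.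
Proof. by apply: sumr_ge0 => k /andP[vk _]; rewrite divr_ge0 ?p_ge0 ?ler0n. Qed.

Lemma has_occE k x : has_occ k x = (occ_word x == occ_int k).
Proof.
apply/forallP/eqP => [xk | /ffunP xk i].
  by apply/ffunP => i; rewrite !ffunE -card_word (eqP (xk i)).
by move: (xk i); rewrite !ffunE -card_word => -[->].
Qed.

Lemma diag_sym_stateE x y : rho (enum_rank x) (enum_rank y) =
  if occ_word x == occ_word y then dicke_weight (occ_word x) else 0.
Proof.
have amp2 (n : nat) : (sqrtC (n%:R : C))^-1 * ((sqrtC n%:R)^-1)^* = n%:R^-1.
  by rewrite geC0_conj ?invr_ge0 ?sqrtC_ge0 ?ler0n // -expr2 exprVn sqrtCK.
rewrite /diag_sym_state summxE.
under eq_bigr => k _ do rewrite !mxE big_ord1 !mxE !enum_rankK !has_occE.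
case: eqP => [<- | neq_xy].
  rewrite /dicke_weight big_mkcondr /=; apply: eq_bigr => k _; rewrite eq_sym.
  by case: eqP => _; rewrite ?amp2 ?rmorph0 ?mulr0.
apply: big1 => k _; case: (occ_word x =P occ_int k) => [xk | _].
  case: (occ_word y =P occ_int k) => [yk | _]; first by rewrite xk yk in neq_xy.
  by rewrite rmorph0 !mulr0.
by rewrite mul0r mulr0.
Qed.

Lemma diag_sym_state_relabel : relabel_invariant rho.
Proof. by move=> pi x y; rewrite !diag_sym_stateE !occ_word_relabel. Qed.

Lemma psd_pair_weight_kernel : psdmx (ptranspose [set i0; i1] rho) ->
  forall s t : 'I_d,
    psd_kernel (fun a c =>
      dicke_weight (occ_seq [:: a] + occ_seq [:: c] + occ_seq [:: s; t])).
Proof.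
move=> /psdmx_kernel psd01 s t.
pose g a : basis4 d := [ffun j : 'I_4 => nth a [:: a; t; a; s] j].
apply: (eq_psd_kernel _ (psd_kernel_comp g psd01)) => a c /=.
rewrite ptransposeE diag_sym_stateE /occ_word /word !ffunE !inE /=.
have -> : occ_seq [:: c; t; a; s] = occ_seq [:: a; t; c; s].
  by apply: occ_seq_perm; apply/seq.permP => P /=; lia.
by rewrite eqxx; congr dicke_weight; apply/ffunP => i; rewrite !ffunE /=; lia.
Qed.

Lemma ptranspose_i0E x y : ptranspose [set i0] rho (enum_rank x) (enum_rank y) =
  if occ_diff x == occ_diff y
  then dicke_weight (occ_seq [:: x i0] + occ_seq [:: y i0] + occ_diff x) else 0.
Proof.
rewrite ptransposeE diag_sym_stateE !occ_word_graft_i0 [occ_seq [:: y i0] + _]addrC.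
by rewrite (inj_eq (addrI _)).
Qed.

Lemma psdmx_ptranspose_i0 :
  psdmx (ptranspose [set i0; i1] rho) -> psdmx (ptranspose [set i0] rho).
Proof.
move=> /psd_pair_weight_kernel psd22; apply/psdmx_kernel.
apply: (psd_kernel_blocks (lab := @occ_diff d)) => [x y | z v v_block].
  by rewrite ptranspose_i0E => /negbTE ->.
pose F a c := dicke_weight (occ_seq [:: a] + occ_seq [:: c] + occ_diff z).
pose in_block x := occ_diff x == occ_diff z.
have blockE x y : in_block x -> in_block y ->
    ptranspose [set i0] rho (enum_rank x) (enum_rank y) = F (x i0) (y i0).
  by move=> /eqP xz /eqP yz; rewrite ptranspose_i0E xz yz eqxx.
have [z0_rest | z0_notin] := boolP (z i0 \in rest z).
  have [s [t zst]] := occ_diff_in z0_rest.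
  rewrite (qform_supported (P := in_block) (K' := fun x y => F (x i0) (y i0)) blockE).
    by apply: psd_kernel_comp; rewrite /F zst; apply: psd22.
  by move=> x /v_block.
rewrite (qform_supported (P := in_block) (K' := fun _ _ => F (z i0) (z i0))).
- exact: (psd_kernel_const (dicke_weight_ge0 _) v).
- move=> x y xz yz; rewrite blockE //.
  by rewrite (occ_diff_notin (eqP xz) z0_notin) (occ_diff_notin (eqP yz) z0_notin).
- by move=> x /v_block.
Qed.

End DiagonalSymmetric.

Theorem lemma4 (C : numClosedFieldType) (d : nat) (hd : (2 <= d)%N)
  (p : occ d -> C)
  (p_ge0 : forall k, valid_occ k -> 0 <= p k)
  (p_sum : \sum_(k : occ d | valid_occ k) p k = 1)
  (S : {set 'I_4}) (hS : #|S| = 2%N)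
  (hPT : psdmx (ptranspose S (diag_sym_state p))) :
  forall T : {set 'I_4}, T != set0 -> T != [set: 'I_4] ->
    psdmx (ptranspose T (diag_sym_state p)).
Proof.
move=> T T0 TT.
have inv_rho := diag_sym_state_relabel p.
have psd_card2 (T2 : {set 'I_4}) :
    #|T2| = 2%N -> psdmx (ptranspose T2 (diag_sym_state p)).
  by move=> cardT2; apply: psdmx_ptranspose_card inv_rho _ hPT; rewrite hS cardT2.
have psd_card1 (T1 : {set 'I_4}) :
    #|T1| = 1%N -> psdmx (ptranspose T1 (diag_sym_state p)).
  move=> cardT1; apply: psdmx_ptranspose_card inv_rho _ (psdmx_ptranspose_i0 p_ge0 _).
    by rewrite cards1 cardT1.
  by apply: psd_card2; rewrite cards2.
have cardTC : (#|T| + #|~: T| = 4)%N by rewrite cardsC card_ord.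
have cardT_gt0 : #|T| != 0%N by rewrite cards_eq0.
have cardTC_gt0 : #|~: T| != 0%N by rewrite cards_eq0 -setCT (can_eq setCK).
have : [|| #|T| == 1%N, #|T| == 2%N | #|~: T| == 1%N] by lia.
case/or3P => /eqP cardT; first exact: psd_card1.
  exact: psd_card2.
by rewrite -(setCK T); apply/psdmx_ptransposeC/psd_card1.
Qed.
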